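(* Let $G(n,n_1,n_2,n_3,p_1,p_2,p_3)$ be a three-layer stochastic block model network satisfying the standing assumptions below. Fix any one of the three layers as target layer, and apply ReduceWeight to all communities of the other two layers. Then the (expected, weighted) modularity of the target layer's partition in the resulting weighted graph is strictly larger than in the original graph.
   Context: Multi-layer stochastic block model $G(n,n_1,\dots,n_L,p_1,\dots,p_L)$: a random graph on $n$ nodes with $L$ layers. For each layer $l$ the nodes are partitioned into $n_l$ planted communities of size $s_l=n/n_l$; independently for each layer, each pair of distinct nodes in a common community of layer $l$ receives an edge from layer $l$ with probability $p_l$; the graph is the simple union of all generated edges. The partitions of different layers are independent: for any $k\ge2$ distinct layers and one community from each, their intersection has $n/(n_{l_1}\cdots n_{l_k})$ nodes (in expectation). Standing assumptions: $n_l\ge4$, $p_l\in[0.05,1]$ for every layer, and $n\ge2\prod_l n_l$. Retention probability of a layer $l$: for a community $i$ of layer $l$ with size $s_l$, $e^i_{ll}$ internal edges and $e^i_{lout}$ outgoing edges, $\widehat{p^i_l}=e^i_{ll}/(\tfrac12 s_l(s_l-1))$, $\widehat{q^i_l}=e^i_{lout}/(s_l(n-s_l))$, $q^i_l=\widehat{q^i_l}/\widehat{p^i_l}$ (computed from expected counts, giving a common value $q_l$ for the layer). ReduceWeight on layer $l$: viewing the graph as weighted, multiply the weight of every internal edge of every community of layer $l$ by $q_l$ (so an edge internal to communities of both reduced layers $a,b$ has its weight multiplied by $q_aq_b$). Weighted modularity of a layer: as $Q_l=\sum_i\big(\frac{e^i_{ll}}{e}-(\frac{d^i_l}{2e})^2\big)$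 with $d^i_l=2e^i_{ll}+e^i_{lout}$, where $e^i_{ll}$, $e^i_{lout}$, $e$ are the (expected) sums of edge weights of internal edges, outgoing edges and all edges. *)

(* Expected-value model of the multi-layer SBM
   G(n, n_1..n_L, p_1..p_L), layers indexed by 'I_L.                        *)
From mathcomp Require Import all_boot all_order all_algebra.
Set Implicit Arguments. Unset Strict Implicit. Unset Printing Implicit Defensive.
Import Order.TTheory GRing.Theory Num.Theory.
Local Open Scope ring_scope.

Section MSBM.
Variables (R : realFieldType) (L : nat).
Variables (n : nat) (nl : 'I_L -> nat) (p : 'I_L -> R).

Definition comm_size (l : 'I_L) : R := n%:R / (nl l)%:R.

(* Expected number of ordered pairs (u,v), u <> v, lying in a common
   community in every layer of T: each node u has n/(prod_{l in T} n_l)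
   nodes (itself included) in the intersection of its communities. *)
Definition pairs_atleast (T : {set 'I_L}) : R :=
  n%:R * (n%:R / (\prod_(l in T) (nl l)%:R) - 1).

(* Expected number of ordered pairs (u,v), u <> v, whose set of layers in
   which they share a community is exactly S (inclusion-exclusion). *)
Definition pairs_exact (S : {set 'I_L}) : R :=
  \sum_(T : {set 'I_L} | S \subset T) (-1) ^+ (#|T| - #|S|) * pairs_atleast T.

Definition edge_prob (S : {set 'I_L}) : R := 1 - \prod_(l in S) (1 - p l).

(* A weighting assigns to each pair type S the weight of its edge. *)
Definition exp_total (w : {set 'I_L} -> R) : R :=
  2^-1 * \sum_(S : {set 'I_L}) pairs_exact S * edge_prob S * w S.

Definition exp_internal (l : 'I_L) (w : {set 'I_L} -> R) : R :=
  (2 * (nl l)%:R)^-1 *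
    \sum_(S : {set 'I_L} | l \in S) pairs_exact S * edge_prob S * w S.

Definition exp_out (l : 'I_L) (w : {set 'I_L} -> R) : R :=
  ((nl l)%:R)^-1 *
    \sum_(S : {set 'I_L} | l \notin S) pairs_exact S * edge_prob S * w S.

Definition modularity (l : 'I_L) (w : {set 'I_L} -> R) : R :=
  \sum_(i < nl l)
     (exp_internal l w / exp_total w
      - ((2 * exp_internal l w + exp_out l w) / (2 * exp_total w)) ^+ 2).

Definition unit_weight : {set 'I_L} -> R := fun _ => 1.

Definition retention (l : 'I_L) : R :=
  let s := comm_size l in
  let phat := exp_internal l unit_weight / (2^-1 * (s * (s - 1))) in
  let qhat := exp_out l unit_weight / (s * (n%:R - s)) in
  qhat / phat.

(* weights after ReduceWeight on every layer of Rd: an edge internal to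
   communities of the layers in S gets weight prod_{l in S, l in Rd} q_l *)
Definition reduced_weight (Rd : {set 'I_L}) : {set 'I_L} -> R :=
  fun S => \prod_(l in S :&: Rd) retention l.

End MSBM.

From mathcomp Require Import all_boot all_order all_algebra.
From mathcomp Require Import ring lra zify.
Set Implicit Arguments. Unset Strict Implicit. Unset Printing Implicit Defensive.
Import Order.TTheory GRing.Theory Num.Theory.
Local Open Scope ring_scope.

(* Write x_l = 1/n_l. Inclusion-exclusion gives the expected number of
   ordered pairs whose exact set of shared layers is S as
   n^2 prod_{l in S} x_l prod_{l notin S} (1 - x_l) - n [S = all layers], so for
   a product weight w(S) = prod_{l in S} c_l with c_t = 1 all expected masses
   factor over the layers. With U = prod_{l <> t} (1 - x_l + x_l c_l),
   V = prod_{l <> t} (1 - x_l + x_l c_l (1 - p_l)), Q = prod_{l <> t} c_l and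
   e = 1 - prod_l (1 - p_l), the pairs outside, resp. inside, the communities
   of layer t carry B = n^2 (1 - x_t) (U - V) and
   A = n^2 x_t (U - (1 - p_t) V) - n e Q, and the modularity of layer t is
   A / (A + B) - 1 / n_t.  For the unit weights U = Q = 1 and
   V = W = prod_{l <> t} (1 - x_l p_l); marking their masses with primes, the
   cross difference A B' - A' B is
   n^3 (1 - x_t) [n x_t p_t (V - W U) + e (U - V - Q (1 - W))], and both terms
   are positive once every retention q_l = c_l lies in (0, 1): each factor of
   V / U decreases with c_l, and U - V >= Q (1 - W) because every pair keeps at
   least the weight Q.  Finally q_l < 1 holds as soon as s_l p_l > 1, which the
   standing assumptions give with room (s_l >= 32, p_l >= 1/20). *)

Section SubsetSums.
Variables (R : comPzRingType) (I : finType).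

Lemma prod_if_setC (F G : I -> R) (S : {set I}) :
  \prod_i (if i \in S then F i else G i) = \prod_(i in S) F i * \prod_(i in ~: S) G i.
Proof.
rewrite (bigID (mem S)) /=; congr (_ * _); first by apply: eq_bigr => i ->.
by apply: eq_big => [i|i /negbTE ->]; rewrite ?inE.
Qed.

Lemma sum_setC_prod (F G : I -> R) :
  \sum_(S : {set I}) \prod_(i in S) F i * \prod_(i in ~: S) G i = \prod_i (F i + G i).
Proof. by rewrite bigA_distr; apply: eq_bigr => S _; rewrite prod_if_setC. Qed.

Lemma sum_supset_sign (y : I -> R) (S : {set I}) :
  \sum_(T : {set I} | S \subset T) (-1) ^+ (#|T| - #|S|) * \prod_(i in T) y i =
  \prod_(i in S) y i * \prod_(i in ~: S) (1 - y i).
Proof.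
(* Expand the right-hand side with the factors (+-y i) + [i \notin S]: the
   terms indexed by a T not containing S vanish. *)
rewrite -prod_if_setC.
have -> : \prod_i (if i \in S then y i else 1 - y i) =
          \prod_i ((if i \in S then y i else - y i) + (if i \in S then 0 else 1)).
  by apply: eq_bigr => i _; case: (i \in S); rewrite ?addr0 // addrC.
rewrite -sum_setC_prod big_mkcond /=; apply: eq_bigr => T _.
have [sST | /subsetPn [i Si nTi]] := boolP (S \subset T); last first.
  by rewrite [X in _ = _ * X](bigD1 i) ?inE //= Si mul0r mulr0.
rewrite [X in _ = _ * X]big1 => [|i]; last first.
  by case: ifP => // Si; rewrite inE (subsetP sST).
have -> : \prod_(i in T) (if i \in S then y i else - y i) =
          \prod_(i in T) (if i \in S then 1 else -1) * \prod_(i in T) y i.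
  by rewrite -big_split /=; apply: eq_bigr => i _; case: (i \in S); rewrite ?mul1r ?mulN1r.
rewrite mulr1; congr (_ * _); rewrite (bigID (mem S)) /= big1 => [|i /andP[_ ->]] //.
rewrite mul1r (eq_bigr (fun=> -1)) => [|i /andP[_ /negbTE ->]] //.
rewrite prodr_const -(cardsID S T) (setIidPr sST) addKn.
by congr (_ ^+ _); apply: eq_card => i; rewrite !inE andbC.
Qed.

Lemma sum_notin_prod (t : I) (f : {set I} -> R) (c : I -> R) :
  \sum_(S : {set I} | t \notin S) f S * \prod_(i in S) c i =
  \sum_(S : {set I}) f S * \prod_(i in S) (if i == t then 0 else c i).
Proof.
rewrite big_mkcond; apply: eq_bigr => S _; case: ifP => [tS | /negbFE tS].
  by congr (_ * _); apply: eq_bigr => i iS; case: eqP => // it; rewrite -it iS in tS.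
by rewrite (bigD1 t) //= eqxx mul0r mulr0.
Qed.

End SubsetSums.

Section RealInequalities.
Variable R : realFieldType.

Lemma prod_gap_ge (I : Type) (r : seq I) (P : pred I) (q a w : I -> R) :
    (forall i, P i -> [/\ 0 <= q i, 0 <= a i & 0 <= w i <= 1]) ->
  \prod_(i <- r | P i) q i * (1 - \prod_(i <- r | P i) w i) <=
  \prod_(i <- r | P i) (q i + a i) - \prod_(i <- r | P i) (q i * w i + a i).
Proof.
move=> bounds; elim: r => [|i r IHr]; first by rewrite !big_nil subrr mulr0.
rewrite !big_cons; case: ifP => // /bounds [q0 a0 /andP [w0 w1]]; move: IHr.
set Q := \prod_(j <- r | P j) q j; set W := \prod_(j <- r | P j) w j.
set U := \prod_(j <- r | P j) (q j + a j); set V := \prod_(j <- r | P j) (q j * w j + a j).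
move=> IHr.
have Q0 : 0 <= Q by apply: prodr_ge0 => j /bounds [].
have W0 : 0 <= W by apply: prodr_ge0 => j /bounds [_ _ /andP []].
have W1 : W <= 1 by apply: prodr_ile1 => j /bounds [_ _].
have QWV : Q * W <= V.
  rewrite /Q /W -big_split /=; apply: ler_prod => j /bounds [qj aj /andP [wj _]].
  by rewrite mulr_ge0 //= lerDl.
have gap0 : 0 <= Q * (1 - W) by apply: mulr_ge0; lra.
rewrite -subr_ge0 (_ : _ - _ = q i * (U - V - Q * (1 - W)) + q i * (1 - w i) * (V - Q * W)
                                + a i * (U - V)); last by ring.
by rewrite !addr_ge0 ?mulr_ge0 ?subr_ge0 //; lra.
Qed.

Lemma cross_sum_gt0 (A0 B0 A1 B1 : R) :
  0 < B0 -> 0 < B1 -> 0 < A0 + B0 -> A0 * B1 < A1 * B0 -> 0 < A1 + B1.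
Proof. by move=> *; nra. Qed.

Lemma ltr_cross_frac (A0 B0 A1 B1 : R) :
  0 < B0 -> 0 < B1 -> 0 < A0 + B0 -> A0 * B1 < A1 * B0 ->
  A0 / (A0 + B0) < A1 / (A1 + B1).
Proof.
move=> B0gt0 B1gt0 S0gt0 cross.
have S1gt0 := cross_sum_gt0 B0gt0 B1gt0 S0gt0 cross.
by rewrite ltr_pdivrMr // mulrAC ltr_pdivlMr //; nra.
Qed.

End RealInequalities.

Section Model.
Variables (R : realFieldType) (L n : nat) (nl : 'I_L -> nat) (p : 'I_L -> R).

Let share (l : 'I_L) : R := ((nl l)%:R)^-1.

Lemma pairs_atleastE (T : {set 'I_L}) :
  pairs_atleast R n nl T = n%:R ^+ 2 * \prod_(l in T) share l - n%:R.
Proof. by rewrite /pairs_atleast /share prodfV; ring. Qed.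

Lemma pairs_exactE (S : {set 'I_L}) :
  pairs_exact R n nl S =
  n%:R ^+ 2 * (\prod_(l in S) share l * \prod_(l in ~: S) (1 - share l))
  - n%:R * (S == setT)%:R.
Proof.
have indicator : \sum_(T : {set 'I_L} | S \subset T) (-1) ^+ (#|T| - #|S|) * \prod_(i in T) 1
                 = (S == setT)%:R :> R.
  rewrite sum_supset_sign big1_eq subrr prodr_const expr0n cards_eq0.
  by rewrite -setCT (inj_eq (@setC_inj _)) mul1r.
rewrite -indicator -sum_supset_sign !mulr_sumr -sumrB; apply: eq_bigr => T _.
by rewrite pairs_atleastE big1_eq; ring.
Qed.

Lemma sum_pairs_prod_weight (c : 'I_L -> R) :
  \sum_(S : {set 'I_L}) pairs_exact R n nl S * edge_prob p S * \prod_(l in S) c l =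
  n%:R ^+ 2 * (\prod_l (1 - share l + share l * c l)
               - \prod_l (1 - share l + share l * c l * (1 - p l)))
  - n%:R * edge_prob p setT * \prod_l c l.
Proof.
have termE (S : {set 'I_L}) :
    pairs_exact R n nl S * edge_prob p S * \prod_(l in S) c l =
    n%:R ^+ 2 * (\prod_(l in S) (share l * c l) * \prod_(l in ~: S) (1 - share l)
      - \prod_(l in S) (share l * c l * (1 - p l)) * \prod_(l in ~: S) (1 - share l))
    - n%:R * ((S == setT)%:R * (edge_prob p S * \prod_(l in S) c l)).
  by rewrite pairs_exactE /edge_prob !big_split /=; ring.
rewrite (eq_bigr _ (fun S _ => termE S)).
rewrite sumrB -!mulr_sumr sumrB !sum_setC_prod (bigD1 setT) //= eqxx mul1r.
rewrite [\sum_(S | _) _]big1 => [|S /negbTE ->]; last by rewrite mul0r.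
rewrite addr0 mulrA; congr (_ * (_ - _) - _ * _).
- by apply: eq_bigr => l _; ring.
- by apply: eq_bigr => l _; ring.
- by apply: eq_bigl => l; rewrite in_setT.
Qed.

(* [mass_in l w] and [mass_out l w] are [2 n_l e^i_ll] and [n_l e^i_lout]. *)
Definition mass_in (l : 'I_L) (w : {set 'I_L} -> R) : R :=
  \sum_(S : {set 'I_L} | l \in S) pairs_exact R n nl S * edge_prob p S * w S.

Definition mass_out (l : 'I_L) (w : {set 'I_L} -> R) : R :=
  \sum_(S : {set 'I_L} | l \notin S) pairs_exact R n nl S * edge_prob p S * w S.

Lemma modularityE (l : 'I_L) (w : {set 'I_L} -> R) :
  (nl l)%:R != 0 :> R -> mass_in l w + mass_out l w != 0 ->
  modularity n nl p l w = mass_in l w / (mass_in l w + mass_out l w) - ((nl l)%:R)^-1.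
Proof.
move=> nl0 mass0.
have total : exp_total n nl p w = 2^-1 * (mass_in l w + mass_out l w).
  by rewrite /exp_total (bigID (fun S : {set 'I_L} => l \in S)).
rewrite /modularity total sumr_const card_ord -mulr_natl /exp_internal /exp_out.
by rewrite -/(mass_in l w) -/(mass_out l w); field; rewrite nl0 mass0.
Qed.

Lemma retentionE (l : 'I_L) : (1 < nl l < n)%N ->
  retention n nl p l = mass_out l (@unit_weight R L) * (comm_size R n nl l - 1) /
                       (mass_in l (@unit_weight R L) * (n%:R - comm_size R n nl l)).
Proof.
case/andP => nl_gt1 nl_ltn.
rewrite /retention /exp_internal /exp_out -/(mass_in _ _) -/(mass_out _ _) /comm_size.
set A := mass_in _ _; have [-> | A0] := eqVneq A 0; first by rewrite !(mul0r, mulr0, invr0).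
have [nl0 n0] : (nl l)%:R != 0 :> R /\ n%:R != 0 :> R by rewrite !pnatr_eq0; lia.
have nnl0 : n%:R * (nl l)%:R - n%:R != 0 :> R by rewrite -natrM -natrB ?pnatr_eq0; nia.
have nln0 : n%:R + -1 * (nl l)%:R != 0 :> R by rewrite mulN1r -natrB ?pnatr_eq0; lia.
by field; rewrite nl0 nnl0 A0 nln0 n0.
Qed.

Lemma reduced_weightE (Rd S : {set 'I_L}) :
  reduced_weight n nl p Rd S = \prod_(l in S) (if l \in Rd then retention n nl p l else 1).
Proof. by rewrite /reduced_weight -big_mkcondr; apply: eq_bigl => l; rewrite inE. Qed.

Section ProductWeight.
Variables (t : 'I_L) (c : 'I_L -> R) (w : {set 'I_L} -> R).
Hypotheses (wE : forall S, w S = \prod_(l in S) c l) (ct : c t = 1).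

Lemma mass_out_prod :
  mass_out t w = n%:R ^+ 2 * (1 - share t) *
    (\prod_(l | l != t) (1 - share l + share l * c l)
     - \prod_(l | l != t) (1 - share l + share l * c l * (1 - p l))).
Proof.
rewrite /mass_out (eq_bigr _ (fun S _ => congr1 _ (wE S))) sum_notin_prod.
rewrite sum_pairs_prod_weight [\prod_l (if _ then _ else _)](bigD1 t) //= eqxx mul0r.
have off_t (F : 'I_L -> R -> R) :
    \prod_(l | l != t) F l (if l == t then 0 else c l) = \prod_(l | l != t) F l (c l).
  by apply: eq_bigr => l /negbTE ->.
rewrite mulr0 subr0 ![\prod_(l < L) _](bigD1 t) //= !eqxx.
rewrite (off_t (fun l x => 1 - share l + share l * x)).
rewrite (off_t (fun l x => 1 - share l + share l * x * (1 - p l))).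
ring.
Qed.

Lemma mass_in_prod :
  mass_in t w = n%:R ^+ 2 * share t *
    (\prod_(l | l != t) (1 - share l + share l * c l)
     - (1 - p t) * \prod_(l | l != t) (1 - share l + share l * c l * (1 - p l)))
  - n%:R * edge_prob p setT * \prod_(l | l != t) c l.
Proof.
have total : mass_in t w + mass_out t w =
    \sum_(S : {set 'I_L}) pairs_exact R n nl S * edge_prob p S * \prod_(l in S) c l.
  rewrite [in RHS](bigID (fun S : {set 'I_L} => t \in S)) /=.
  by congr (_ + _); apply: eq_bigr => S _; rewrite wE.
rewrite -[mass_in t w](addrK (mass_out t w)) total sum_pairs_prod_weight mass_out_prod.
by rewrite ![\prod_(l < L) _](bigD1 t) //= ct; ring.
Qed.

End ProductWeight.

(* the probability that no layer other than [l] joins a uniformly random pair *)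
Let silent (l : 'I_L) : R := \prod_(k | k != l) (1 - share k * p k).

Lemma mass_in_unit (l : 'I_L) :
  mass_in l (@unit_weight R L) =
  n%:R ^+ 2 * share l * (1 - (1 - p l) * silent l) - n%:R * edge_prob p setT.
Proof.
rewrite (@mass_in_prod l (fun=> 1)) // => [|S]; last by rewrite big1_eq.
rewrite big1_eq (eq_bigr (fun=> 1)) => [|k _]; last by ring.
rewrite big1_eq (eq_bigr (fun k => 1 - share k * p k)) => [|k _]; last by ring.
by rewrite mulr1.
Qed.

Lemma mass_out_unit (l : 'I_L) :
  mass_out l (@unit_weight R L) = n%:R ^+ 2 * (1 - share l) * (1 - silent l).
Proof.
rewrite (@mass_out_prod l (fun=> 1)) // => [|S]; last by rewrite big1_eq.
rewrite (eq_bigr (fun=> 1)) => [|k _]; last by ring.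
by rewrite big1_eq (eq_bigr (fun k => 1 - share k * p k)) => [|k _]; last by ring.
Qed.

Section Reweighting.
Hypotheses (L_gt1 : (1 < L)%N) (nl_gt1 : forall l, (1 < nl l)%N)
  (p_range : forall l, 0 < p l <= 1) (size_p_gt1 : forall l, 1 < comm_size R n nl l * p l).

Lemma share_range l : 0 < share l < 1.
Proof.
have nl_gt1R : 1 < (nl l)%:R :> R by rewrite ltr1n.
by rewrite invr_gt0 invf_lt1 ?nl_gt1R //; lra.
Qed.

Lemma n_share_gt1 l : 1 < n%:R * share l.
Proof.
have /andP [p0 p1] := p_range l; have /andP [x0 _] := share_range l.
have := size_p_gt1 l; rewrite /comm_size -/(share l); nra.
Qed.

Lemma n_gt0 : 0 < n%:R :> R.
Proof.
have l : 'I_L := Ordinal (ltnW L_gt1).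
have /andP [x0 x1] := share_range l; have := n_share_gt1 l; nra.
Qed.

Lemma has_other_layer l : has (fun k => k != l) (index_enum 'I_L).
Proof.
have /card_gt0P [k] : (0 < #|predC1 l|)%N by rewrite cardC1 card_ord; lia.
by rewrite inE => kl; apply/hasP; exists k; rewrite ?mem_index_enum.
Qed.

Lemma silent_range l : 0 < silent l < 1.
Proof.
have factor k : 0 < 1 - share k * p k < 1.
  by have /andP [? ?] := share_range k; have /andP [? ?] := p_range k; apply/andP; split; nra.
apply/andP; split; first by apply: prodr_gt0 => k _; case/andP: (factor k).
apply: (@lt_le_trans _ _ (\prod_(k | k != l) 1)); last by rewrite big1_eq.
by apply: ltr_prod (has_other_layer l) _ => k _; case/andP: (factor k) => /ltW -> ->.
Qed.

Lemma edge_prob_range (S : {set 'I_L}) : 0 <= edge_prob p S <= 1.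
Proof.
have /andP [P0 P1] : 0 <= \prod_(l in S) (1 - p l) <= 1.
  apply/andP; split; first by apply: prodr_ge0 => l _; have /andP [? ?] := p_range l; lra.
  by apply: prodr_ile1 => l _; have /andP [? ?] := p_range l; apply/andP; split; lra.
by rewrite /edge_prob; lra.
Qed.

Lemma mass_in_unit_gt0 l : 0 < mass_in l (@unit_weight R L).
Proof.
have /andP [p0 p1] := p_range l; have /andP [W0 W1] := silent_range l.
have /andP [_ e1] := edge_prob_range setT; have nxp1 : 1 < n%:R * share l * p l := size_p_gt1 l.
have /andP [x0 _] := share_range l; have n0 := n_gt0.
rewrite mass_in_unit.
have -> : n%:R ^+ 2 * share l * (1 - (1 - p l) * silent l) - n%:R * edge_prob p setT =
          n%:R * (n%:R * share l * p l - edge_prob p setT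
                  + n%:R * share l * ((1 - p l) * (1 - silent l))) by ring.
apply: mulr_gt0 => //; have : 0 <= n%:R * share l * ((1 - p l) * (1 - silent l)).
  by apply: mulr_ge0; apply: mulr_ge0; lra.
lra.
Qed.

Lemma mass_out_unit_gt0 l : 0 < mass_out l (@unit_weight R L).
Proof.
have /andP [x0 x1] := share_range l; have /andP [W0 W1] := silent_range l.
have n0 := n_gt0.
by rewrite mass_out_unit; apply: mulr_gt0; [apply: mulr_gt0|]; nra.
Qed.

Lemma retention_range l : 0 < retention n nl p l < 1.
Proof.
have /andP [p0 p1] := p_range l; have /andP [W0 W1] := silent_range l.
have /andP [e0 e1] := edge_prob_range setT; have nx1 := n_share_gt1 l.
have /andP [x0 x1] := share_range l; have n0 := n_gt0; have nxp1 : 1 < n%:R * share l * p l := size_p_gt1 l.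
have nl_ltn : (nl l < n)%N.
  have nl0 : 0 < (nl l)%:R :> R by rewrite ltr0n; have := nl_gt1 l; lia.
  by rewrite -(ltr_nat R) -(mul1r (nl l)%:R) -ltr_pdivlMr.
rewrite retentionE ?nl_gt1 ?nl_ltn // /comm_size -/(share l).
have A0 := mass_in_unit_gt0 l; have B0 := mass_out_unit_gt0 l.
have D0 : 0 < mass_in l (@unit_weight R L) * (n%:R - n%:R * share l) by apply: mulr_gt0; nra.
have N0 : 0 < mass_out l (@unit_weight R L) * (n%:R * share l - 1) by apply: mulr_gt0; lra.
rewrite divr_gt0 //= ltr_pdivrMr // -subr_gt0.
(* q_l < 1 amounts to e < 1 - W + s_l p_l W, and s_l p_l > 1 *)
have -> : 1 * (mass_in l (@unit_weight R L) * (n%:R - n%:R * share l))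
          - mass_out l (@unit_weight R L) * (n%:R * share l - 1) =
          n%:R ^+ 2 * (1 - share l) * ((n%:R * share l * p l - 1) * silent l
                                       + (1 - edge_prob p setT)).
  by rewrite mass_in_unit mass_out_unit; ring.
by apply: mulr_gt0; [apply: mulr_gt0|]; nra.
Qed.

Section ReducedOthers.
Variables (t : 'I_L) (c : 'I_L -> R) (w : {set 'I_L} -> R).
Hypotheses (c_range : forall l, l != t -> 0 < c l < 1)
  (wE : forall S, w S = \prod_(l in S) c l) (ct : c t = 1).

Lemma silent_mean_lt :
  silent t * \prod_(l | l != t) (1 - share l + share l * c l) <
  \prod_(l | l != t) (1 - share l + share l * c l * (1 - p l)).
Proof.
rewrite /silent -big_split /=; apply: ltr_prod (has_other_layer t) _ => l lt.
have /andP [p0 p1] := p_range l; have /andP [x0 x1] := share_range l.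
have /andP [c0 c1] := c_range lt.
have gap : 1 - share l + share l * c l * (1 - p l)
           - (1 - share l * p l) * (1 - share l + share l * c l)
           = share l * p l * (1 - share l) * (1 - c l) by ring.
apply/andP; split; first by apply: mulr_ge0; nra.
by rewrite -subr_gt0 gap; apply: mulr_gt0; [apply: mulr_gt0; [apply: mulr_gt0|]|]; lra.
Qed.

Lemma mean_gap_ge :
  \prod_(l | l != t) c l * (1 - silent t) <=
  \prod_(l | l != t) (1 - share l + share l * c l)
  - \prod_(l | l != t) (1 - share l + share l * c l * (1 - p l)).
Proof.
have -> : \prod_(l | l != t) (1 - share l + share l * c l) =
          \prod_(l | l != t) (c l + (1 - share l) * (1 - c l)).
  by apply: eq_bigr => l _; ring.
have -> : \prod_(l | l != t) (1 - share l + share l * c l * (1 - p l)) =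
          \prod_(l | l != t) (c l * (1 - share l * p l) + (1 - share l) * (1 - c l)).
  by apply: eq_bigr => l _; ring.
apply: prod_gap_ge => l lt.
have /andP [p0 p1] := p_range l; have /andP [x0 x1] := share_range l.
have /andP [c0 c1] := c_range lt.
by split; [lra | apply: mulr_ge0; lra | apply/andP; split; nra].
Qed.

Lemma mass_out_reduced_gt0 : 0 < mass_out t w.
Proof.
rewrite (mass_out_prod t wE).
have Q0 : 0 < \prod_(l | l != t) c l by apply: prodr_gt0 => l /c_range /andP [].
have /andP [x0 x1] := share_range t; have /andP [W0 W1] := silent_range t.
have n0 := n_gt0; have gap := mean_gap_ge.
by apply: mulr_gt0; [apply: mulr_gt0|]; nra.
Qed.

Lemma mass_cross_lt :
  mass_in t (@unit_weight R L) * mass_out t w < mass_in t w * mass_out t (@unit_weight R L).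
Proof.
rewrite mass_in_unit mass_out_unit (mass_in_prod wE ct) (mass_out_prod t wE).
move: silent_mean_lt mean_gap_ge.
set U := \prod_(l | l != t) (1 - share l + share l * c l).
set V := \prod_(l | l != t) (1 - share l + share l * c l * (1 - p l)).
set Q := \prod_(l | l != t) c l; set W := silent t; set e := edge_prob p setT => WUV gap.
rewrite -subr_gt0.
have -> : (n%:R ^+ 2 * share t * (U - (1 - p t) * V) - n%:R * e * Q) *
            (n%:R ^+ 2 * (1 - share t) * (1 - W)) -
          (n%:R ^+ 2 * share t * (1 - (1 - p t) * W) - n%:R * e) *
            (n%:R ^+ 2 * (1 - share t) * (U - V)) =
          n%:R ^+ 3 * (1 - share t) *
            (n%:R * share t * p t * (V - W * U) + e * (U - V - Q * (1 - W))) by ring.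
have /andP [x0 x1] := share_range t; have /andP [e0 _] : 0 <= e <= 1 := edge_prob_range setT.
have nxp1 : 1 < n%:R * share t * p t := size_p_gt1 t; have n0 := n_gt0.
have : 0 <= e * (U - V - Q * (1 - W)) by apply: mulr_ge0; lra.
have : 0 < n%:R * share t * p t * (V - W * U) by apply: mulr_gt0; lra.
by move=> *; apply: mulr_gt0; [apply: mulr_gt0|]; rewrite ?exprn_gt0; lra.
Qed.

End ReducedOthers.

Theorem modularity_reduce_others_gt t :
  modularity n nl p t (@unit_weight R L) < modularity n nl p t (reduced_weight n nl p [set~ t]).
Proof.
pose c l := if l \in [set~ t] then retention n nl p l else 1.
have wE S : reduced_weight n nl p [set~ t] S = \prod_(l in S) c l := reduced_weightE _ S.
have ct : c t = 1 by rewrite /c !inE eqxx.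
have c_range l : l != t -> 0 < c l < 1 by rewrite /c !inE => ->; exact: retention_range.
have nl0 : (nl t)%:R != 0 :> R by rewrite pnatr_eq0; have := nl_gt1 t; lia.
have A0 := mass_in_unit_gt0 t; have B0 := mass_out_unit_gt0 t.
have B1 := mass_out_reduced_gt0 c_range wE.
have cross := mass_cross_lt c_range wE ct.
have S0 : 0 < mass_in t (@unit_weight R L) + mass_out t (@unit_weight R L) by lra.
rewrite !modularityE // ?lt0r_neq0 //; last exact: cross_sum_gt0 cross.
by rewrite ltrD2r ltr_cross_frac.
Qed.

End Reweighting.

End Model.

Lemma standing_size_ge (L n : nat) (nl : 'I_L -> nat) (l : 'I_L) :
  (forall k, 4 <= nl k)%N -> (2 * \prod_k nl k <= n)%N -> (2 * 4 ^ L.-1 * nl l <= n)%N.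
Proof.
move=> nl_ge4 /(leq_trans _); apply; rewrite (bigD1 l) //=.
have : (4 ^ L.-1 <= \prod_(k | k != l) nl k)%N.
  have -> : L.-1 = #|predC1 l| by rewrite cardC1 card_ord.
  by rewrite -prod_nat_const; apply: leq_prod.
by move=> le_pow; rewrite -mulnA leq_pmul2l // mulnC leq_mul2l le_pow orbT.
Qed.

Unset Implicit Arguments.

Theorem theorem15 (R : realFieldType) (n : nat) (nl : 'I_3 -> nat)
    (p : 'I_3 -> R)
    (Hnl : forall l, (4 <= nl l)%N)
    (Hp : forall l, (20%:R)^-1 <= p l <= 1)
    (Hn : (2 * \prod_(l < 3) nl l <= n)%N)
    (t : 'I_3) :
  modularity n nl p t (@unit_weight R 3) <
  modularity n nl p t (reduced_weight n nl p [set~ t]).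
Proof.
apply: modularity_reduce_others_gt => // l.
- by have := Hnl l; lia.
- have /andP [p20 ->] := Hp l; rewrite andbT; apply: lt_le_trans p20.
  by rewrite invr_gt0 ltr0n.
- have /andP [p20 _] := Hp l.
  have s32 : 32 <= comm_size R n nl l.
    have nl0 : 0 < (nl l)%:R :> R by rewrite ltr0n; have := Hnl l; lia.
    rewrite /comm_size ler_pdivlMr // -natrM ler_nat.
    exact: standing_size_ge Hnl Hn.
  nra.
Qed.
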